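(* Let $\mathcal{C}$ be the structure described in the context. Then $R(x,y)$ forms an antichain tree modulo $\mathrm{Th}(\mathcal{C})$: there is $\langle c_\eta\rangle_{\eta\in{}^{\omega>}2}$ in a monster model of $\mathrm{Th}(\mathcal{C})$ such that for every $X\subseteq{}^{\omega>}2$, $\{R(x,c_\eta):\eta\in X\}$ is consistent if and only if $X$ is an antichain.
   Context: ${}^{\omega>}2$ is the binary tree of finite $0/1$-sequences with initial-segment order $\trianglelefteq$; ${}^{n>}2$ is the set of sequences of length $<n$. A set $X$ is an antichain if its elements are pairwise $\trianglelefteq$-incomparable; $X\subseteq{}^{n>}2$ is a maximal antichain in ${}^{n>}2$ if it is an antichain not properly contained in any antichain of ${}^{n>}2$ (a maximal antichain in ${}^{n>}2$ is also maximal in ${}^{m>}2$ for $m\ge n$). The language is $\{R\}$ with $R$ binary. $\mathcal{C}$ has universe the disjoint union of $A=\{a_X: X$ a maximal antichain in ${}^{n>}2$ for some $n<\omega\}$ and $B=\{b_\eta:\eta\in{}^{\omega>}2\}$, and $R^{\mathcal{C}}=\{(a_X,b_\eta): \eta\in X\}$. (This is the union of the finite structures $\mathcal{C}_n$ with universe $\{a_X:X$ maximal antichain in ${}^{n>}2\}\cup\{b_\eta:\eta\in{}^{n>}2\}$ and the same relation.) *)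

From Stdlib Require Import List Arith.
Import ListNotations.

(* Nodes of the binary tree ^{omega>}2: finite 0/1-sequences. *)
Definition node := list bool.

Definition initseg (s t : node) : Prop := exists u, t = s ++ u.

Definition antichain (X : node -> Prop) : Prop :=
  forall s t, X s -> X t -> s <> t -> ~ initseg s t /\ ~ initseg t s.

Definition below (n : nat) (X : node -> Prop) : Prop :=
  forall s, X s -> length s < n.

Definition max_antichain_in (n : nat) (X : node -> Prop) : Prop :=
  below n X /\ antichain X /\
  forall Y : node -> Prop, below n Y -> antichain Y ->
    (forall s, X s -> Y s) -> forall s, Y s -> X s.

Definition MaxAC := { X : node -> Prop | exists n, max_antichain_in n X }.

Inductive Cuniv : Type :=
| a_ : MaxAC -> Cuniv
| b_ : node -> Cuniv.

Definition RC (u v : Cuniv) : Prop :=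
  match u, v with
  | a_ X, b_ eta => proj1_sig X eta
  | _, _ => False
  end.

Inductive form : Type :=
| fR : nat -> nat -> form
| fEq : nat -> nat -> form
| fTrue : form
| fFalse : form
| fNot : form -> form
| fAnd : form -> form -> form
| fOr : form -> form -> form
| fImp : form -> form -> form
| fAll : nat -> form -> form
| fEx : nat -> form -> form.

Definition upd {M : Type} (v : nat -> M) (i : nat) (m : M) : nat -> M :=
  fun j => if Nat.eqb j i then m else v j.

Fixpoint sat {M : Type} (RM : M -> M -> Prop) (v : nat -> M) (f : form) : Prop :=
  match f with
  | fR i j => RM (v i) (v j)
  | fEq i j => v i = v j
  | fTrue => True
  | fFalse => False
  | fNot g => ~ sat RM v g
  | fAnd g h => sat RM v g /\ sat RM v h
  | fOr g h => sat RM v g \/ sat RM v h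
  | fImp g h => sat RM v g -> sat RM v h
  | fAll i g => forall m, sat RM (upd v i m) g
  | fEx i g => exists m, sat RM (upd v i m) g
  end.

Definition valid {M : Type} (RM : M -> M -> Prop) (f : form) : Prop :=
  forall v : nat -> M, sat RM v f.

Definition models_ThC (M : Type) (RM : M -> M -> Prop) : Prop :=
  forall f : form, valid RC f -> valid RM f.

(* The partial type { R(x, c_eta) : eta in X } is consistent (over the model M):
   every finite subset is realized in M (compactness). *)
Definition R_type_consistent {M : Type} (RM : M -> M -> Prop) (c : node -> M)
  (X : node -> Prop) : Prop :=
  forall F : list node, (forall eta, In eta F -> X eta) ->
    exists m : M, forall eta, In eta F -> RM m (c eta).

(* Take the model to be C itself and c_eta := b_eta.  Every a_X is R-related
   exactly to the members of an antichain, so a consistent type forces X to be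
   an antichain.  Conversely, a finite antichain F below level N is contained in
   the maximal antichain of ^{N+1>}2 consisting of F together with all nodes of
   length N that extend no member of F; the corresponding a_X realizes the
   finite part { R(x, c_eta) : eta in F }. *)

From Stdlib Require Import List Bool Lia.
Import ListNotations.

Lemma initseg_length s t : initseg s t -> length s <= length t.
Proof. intros [u ->]. rewrite length_app. lia. Qed.

Lemma initseg_length_eq s t : initseg s t -> length s = length t -> s = t.
Proof.
  intros [u ->] E. rewrite length_app in E.
  destruct u as [|b u]; [now rewrite app_nil_r | simpl in E; lia].
Qed.

Lemma initseg_comparable s s' t :
  initseg s t -> initseg s' t -> initseg s s' \/ initseg s' s.
Proof.
  revert s' t. induction s as [|a s IHs]; intros s' t [u Hu] [u' Hu'].
  - left. now exists s'.
  - destruct s' as [|b s'].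
    + right. now exists (a :: s).
    + subst t. simpl in Hu'. injection Hu' as <- E.
      destruct (IHs s' (s ++ u)) as [[w Hw]|[w Hw]].
      * now exists u.
      * now exists u'.
      * left. exists w. simpl. congruence.
      * right. exists w. simpl. congruence.
Qed.

Section Completion.

Variable F : list node.
Hypothesis F_antichain : antichain (fun s => In s F).

Let N := S (list_max (map (@length bool) F)).

Definition completion (s : node) : Prop :=
  In s F \/ (length s = N /\ forall f, In f F -> ~ initseg f s).

Lemma length_lt_level f : In f F -> length f < N.
Proof.
  intros Hf. unfold N. apply le_n_S.
  apply (proj1 (Forall_forall _ _) (proj1 (list_max_le _ _) (le_n _))), in_map, Hf.
Qed.

Lemma completion_below : below (S N) completion.
Proof.
  intros s [Hs|[Ls _]]; [pose proof (length_lt_level s Hs) |]; lia.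
Qed.

Lemma completion_antichain : antichain completion.
Proof.
  intros s t [Hs|[Ls Hs]] [Ht|[Lt Ht]] Hst.
  - now apply F_antichain.
  - split; [now apply Ht|].
    intros I%initseg_length. pose proof (length_lt_level s Hs). lia.
  - split; [|now apply Hs].
    intros I%initseg_length. pose proof (length_lt_level t Ht). lia.
  - split; intros I%initseg_length_eq; congruence.
Qed.

Lemma completion_maximal (Y : node -> Prop) :
  below (S N) Y -> antichain Y -> (forall s, completion s -> Y s) ->
  forall s, Y s -> completion s.
Proof.
  intros Ybelow Yantichain Ysup s Ys.
  destruct (in_dec (list_eq_dec bool_dec) s F) as [Hs|Hs]; [now left|right].
  assert (incomparable : forall f, In f F -> ~ initseg f s /\ ~ initseg s f).
  { intros f Hf.
    destruct (Yantichain f s (Ysup f (or_introl Hf)) Ys) as [A B];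
      [intros ->; contradiction | auto]. }
  split; [|intros f Hf; apply incomparable, Hf].
  (* s is below level N; padding it to level N gives a member of the
     completion, which must coincide with s since Y is an antichain. *)
  set (t := s ++ repeat false (N - length s)).
  assert (st : initseg s t) by (exists (repeat false (N - length s)); reflexivity).
  assert (Lt : length t = N).
  { unfold t. rewrite length_app, repeat_length. specialize (Ybelow s Ys). lia. }
  assert (Yt : Y t).
  { apply Ysup. right. split; [exact Lt|].
    intros f Hf ft. destruct (incomparable f Hf) as [fs sf].
    now destruct (initseg_comparable f s t ft st). }
  destruct (list_eq_dec bool_dec s t) as [E | E]; [now rewrite E|].
  exfalso. destruct (Yantichain s t Ys Yt E) as [not_st _]. exact (not_st st).
Qed.

Lemma completion_max_antichain : max_antichain_in (S N) completion.
Proof.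
  split; [|split].
  - exact completion_below.
  - exact completion_antichain.
  - exact completion_maximal.
Qed.

End Completion.

Lemma finite_antichain_extends (F : list node) :
  antichain (fun s => In s F) ->
  exists Y : MaxAC, forall s, In s F -> proj1_sig Y s.
Proof.
  intros HF.
  assert (Hmax : exists n, max_antichain_in n (completion F))
    by (eexists; exact (completion_max_antichain F HF)).
  exists (exist _ (completion F) Hmax).
  intros s Hs. now left.
Qed.

Lemma RC_antichain (u : Cuniv) : antichain (fun eta => RC u (b_ eta)).
Proof.
  destruct u as [[X HX]|eta]; simpl.
  - destruct HX as [n [_ [HX _]]]. exact HX.
  - intros s t [].
Qed.

Lemma consistent_antichain (X : node -> Prop) :
  R_type_consistent RC b_ X -> antichain X.
Proof.
  intros HX s t Hs Ht Hst.
  destruct (HX [s; t]) as [m Hm].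
  { intros e [<-|[<-|[]]]; assumption. }
  apply (RC_antichain m); [apply Hm; simpl; tauto .. | exact Hst].
Qed.

Lemma antichain_consistent (X : node -> Prop) :
  antichain X -> R_type_consistent RC b_ X.
Proof.
  intros HX F HF.
  destruct (finite_antichain_extends F) as [Y HY].
  { intros s t Hs Ht. apply HX; auto. }
  exists (a_ Y). exact HY.
Qed.

Theorem proposition6p2 :
  exists (M : Type) (RM : M -> M -> Prop) (c : node -> M),
    models_ThC M RM /\
    forall X : node -> Prop, R_type_consistent RM c X <-> antichain X.
Proof.
  exists Cuniv, RC, b_. split.
  - intros f Hf. exact Hf.
  - intros X. split.
    + apply consistent_antichain.
    + apply antichain_consistent.
Qed.
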